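(* Let $V=\coprod_{n\in\mathbb{Z}}V_{(n)}$ be a $\mathbb{Z}$-graded vertex algebra, $W=\coprod_{n\in\mathbb{N}}W_{(n)}$ an $\mathbb{N}$-graded vector space and $Y_W:V\otimes W\to W((x))$ a linear map, $Y_W(u,x)=\sum_nu_nx^{-n-1}$, such that $u_n$ maps $W_{(j)}$ into $W_{(j+m-n-1)}$ for $u\in V_{(m)}$. Assume that for all homogeneous $u,v\in V$, homogeneous $w\in W$ and $p,q\in\mathbb{Z}$ with $q<k:=\mathrm{wt}\,v+\deg w$, setting $l=\mathrm{wt}\,u+\deg w$, $$\mathrm{Res}_{x_0}\mathrm{Res}_{x_2}(x_0+x_2)^px_2^qY_W(u,x_0+x_2)Y_W(v,x_2)w=\mathrm{Res}_{x_0}\mathrm{Res}_{x_2}\Big(\sum_{i=0}^{k-q-1}\tbinom{p-l}{i}x_0^{p-l-i}x_2^i\Big)x_2^q(x_0+x_2)^lY_W(Y(u,x_0)v,x_2)w.$$ Then for all $u,v\in V$, homogeneous $w\in W$ and $p',q'\in\mathbb{Z}$ with $q'<\deg w$, $$\mathrm{Res}_{x_1}\mathrm{Res}_{x_2}x_1^{p'}x_2^{q'}Y_W(x_1^{L(0)}u,x_1)Y_W(x_2^{L(0)}v,x_2)w=\mathrm{Res}_{x_0}\mathrm{Res}_{x_2}\,Q(x_0,x_2)\,x_2^{q'}(x_0+x_2)^{\deg w}Y_W(Y((x_0+x_2)^{L(0)}u,x_0)x_2^{L(0)}v,x_2)w,$$ where $Q(x_0,x_2)=\sum_{i=0}^{\deg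 w-q'-1}\binom{p'-\deg w}{i}x_0^{p'-\deg w-i}x_2^i$.
   Context: A $\mathbb{Z}$-graded vertex algebra is a vertex algebra $(V,Y,\mathbf{1})$ with $V=\coprod_{n\in\mathbb{Z}}V_{(n)}$ and $[d,Y(u,x)]=x\frac{d}{dx}Y(u,x)+Y(du,x)$ where $du=nu$ for $u\in V_{(n)}$; $\mathrm{wt}\,u=n$ for $u\in V_{(n)}$, and $L(0)=d$, so $x^{L(0)}u=x^{\mathrm{wt}\,u}u$ for homogeneous $u$ (extended linearly). For $w\in W_{(n)}$, $\deg w=n$. Expressions $(x_0+x_2)^n$ and $Y_W(u,x_0+x_2)$ are expanded in nonnegative powers of $x_2$. *)

From HB Require Import structures.
From mathcomp Require Import all_boot all_order all_algebra.
From Stdlib Require Import ClassicalEpsilon.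
Set Implicit Arguments. Unset Strict Implicit. Unset Printing Implicit Defensive.
Import Order.TTheory GRing.Theory Num.Theory.
Local Open Scope ring_scope.

(* Finite-support sums over nat and int.  The value is the genuine sum *)
(* whenever the family has finite support (the only case in which it   *)
(* is used meaningfully); otherwise it is some unspecified partial sum. *)
Section FinSums.
Variable M : zmodType.

Definition finsuppN (f : nat -> M) : Prop :=
  exists N : nat, forall n : nat, (N <= n)%N -> f n = 0.
Definition finsuppZ (f : int -> M) : Prop :=
  exists N : nat, forall n : int, (N <= `|n|)%N -> f n = 0.

Definition fsumN (f : nat -> M) : M :=
  let N := epsilon (inhabits 0%N)
             (fun N : nat => forall n : nat, (N <= n)%N -> f n = 0) in
  \sum_(i < N) f i.
Definition fsumZ (f : int -> M) : M :=
  let N := epsilon (inhabits 0%N)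
             (fun N : nat => forall n : int, (N <= `|n|)%N -> f n = 0) in
  \sum_(i < 2 * N) f (i%:Z - N%:Z).
End FinSums.

(* binom(-(k+1), j) = (-1)^j binom(k+j, j).                            *)
Definition binZ (n : int) (j : nat) : int :=
  match n with
  | Posz k => ('C(k, j))%:Z
  | Negz k => (-1) ^+ j * ('C(k + j, j))%:Z
  end.

(* Gradings, given by the family of projections onto the homogeneous   *)
(* subspaces of a direct sum decomposition.                            *)
Definition linearP (K : fieldType) (A B : lmodType K) (f : A -> B) : Prop :=
  forall (a : K) (x y : A), f (a *: x + y) = a *: f x + f y.

Definition is_Zgrading (K : fieldType) (V : lmodType K) (pr : int -> V -> V) :=
  [/\ forall n, linearP (pr n),
      forall n m v, pr n (pr m v) = if n == m then pr n v else 0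
    & forall v, finsuppZ (fun n => pr n v) /\ v = fsumZ (fun n => pr n v)].

Definition is_Ngrading (K : fieldType) (W : lmodType K) (prW : nat -> W -> W) :=
  [/\ forall n, linearP (prW n),
      forall n m w, prW n (prW m w) = if n == m then prW n w else 0
    & forall w, finsuppN (fun n => prW n w) /\ w = fsumN (fun n => prW n w)].

Definition homV (K : fieldType) (V : lmodType K) (pr : int -> V -> V) (m : int) (v : V) :=
  pr m v = v.
Definition homW (K : fieldType) (W : lmodType K) (prW : nat -> W -> W) (n : nat) (w : W) :=
  prW n w = w.
Definition homWz (K : fieldType) (W : lmodType K) (prW : nat -> W -> W) (z : int) (w : W) :=
  match z with Posz n => homW prW n w | Negz _ => w = 0 end.

(* grading operator d = L(0):  d v = sum_n n v_(n) *)
Definition dop (K : fieldType) (V : lmodType K) (pr : int -> V -> V) (v : V) : V :=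
  fsumZ (fun n => pr n v *~ n).

(* Z-graded vertex algebra.  Y u n v = u_n v, i.e. Y(u,x)v = sum u_n v x^{-n-1}. *)
(* The Jacobi identity is stated in its component (Borcherds) form.     *)
Definition is_ZVA (K : fieldType) (V : lmodType K) (vac : V)
    (Y : V -> int -> V -> V) (pr : int -> V -> V) : Prop :=
  [/\
      (forall n v, linearP (fun u => Y u n v)) /\ (forall u n, linearP (Y u n)),
      (forall u v, exists N : int, forall n, N <= n -> Y u n v = 0),
      (forall n v, Y vac n v = if n == -1 then v else 0),
      (forall v, (forall n, 0 <= n -> Y v n vac = 0) /\ Y v (-1) vac = v)
    &
      (forall u v w (p q r : int),
        fsumN (fun i => Y (Y u (r + i%:Z) v) (p + q - i%:Z) w *~ binZ p i)
        = fsumN (fun i => (Y u (p + r - i%:Z) (Y v (q + i%:Z) w)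
                           - Y v (q + r - i%:Z) (Y u (p + i%:Z) w) *~ ((-1) ^+ `|r|%N))
                          *~ ((-1) ^+ i * binZ r i))) /\
      is_Zgrading pr /\
      (* [d, Y(u,x)] = x d/dx Y(u,x) + Y(du,x), componentwise *)
      (forall u v n, dop pr (Y u n v) - Y u n (dop pr v)
                     = Y u n v *~ (- n - 1) + Y (dop pr u) n v)].

Definition is_YW (K : fieldType) (V W : lmodType K) (pr : int -> V -> V)
    (prW : nat -> W -> W) (YW : V -> int -> W -> W) : Prop :=
  [/\ (forall n w, linearP (fun u => YW u n w)) /\ (forall u n, linearP (YW u n)),
      (forall u w, exists N : int, forall n, N <= n -> YW u n w = 0)
    & (forall (m : int) (j : nat) u w n, homV pr m u -> homW prW j w ->
         homWz prW (j%:Z + m - n - 1) (YW u n w))].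

(* Formal series.  A two-variable series F : ser2 M stands for          *)
(*   sum_{a,b in Z} F a b  x_A^a x_B^b,                                 *)
(* a one-variable series G : int -> M for sum_b G b x^b.               *)
(* (x_0+x_2)^n is always expanded in nonnegative powers of x_2.        *)
Definition ser2 (M : Type) := int -> int -> M.

Definition Res2 (M : Type) (F : ser2 M) : M := F (-1) (-1).

Definition mono (M : Type) (e0 e2 : int) (F : ser2 M) : ser2 M :=
  fun a b => F (a - e0) (b - e2).

Definition polymul (M : zmodType) (N : nat) (c e0 e2 : nat -> int) (F : ser2 M) : ser2 M :=
  fun a b => \sum_(i < N) F (a - e0 i) (b - e2 i) *~ c i.

(* (x_0+x_2)^n F = sum_{j>=0} binom(n,j) x_0^{n-j} x_2^j F *)
Definition binmul (M : zmodType) (n : int) (F : ser2 M) : ser2 M :=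
  fun a b => fsumN (fun j => F (a - n + j%:Z) (b - j%:Z) *~ binZ n j).
Definition binmul_ok (M : zmodType) (n : int) (F : ser2 M) : Prop :=
  forall a b, finsuppN (fun j => F (a - n + j%:Z) (b - j%:Z) *~ binZ n j).

Definition cst1 (M : zmodType) (v : M) : int -> M := fun b => if b == 0 then v else 0.
Definition cst2 (M : zmodType) (v : M) : ser2 M :=
  fun a b => if (a == 0) && (b == 0) then v else 0.

(* x^{L(0)} v = sum_n x^n v_(n) *)
Definition Lpow1 (K : fieldType) (V : lmodType K) (pr : int -> V -> V) (v : V) : int -> V :=
  fun n => pr n v.
(* (x_0+x_2)^{L(0)} u = sum_r (x_0+x_2)^r u_(r) = sum_r sum_{j>=0} binom(r,j) x_0^{r-j} x_2^j u_(r) *)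
Definition Lpow2 (K : fieldType) (V : lmodType K) (pr : int -> V -> V) (u : V) : ser2 V :=
  fun a b => match b with
             | Posz j => pr (a + b) u *~ binZ (a + b) j
             | Negz _ => 0
             end.

(* Y(G(x_0,x_2), x_0) H(x_2) *)
Definition Yser (K : fieldType) (V : lmodType K) (Y : V -> int -> V -> V)
    (G : ser2 V) (H : int -> V) : ser2 V :=
  fun a b => fsumZ (fun b1 => fsumZ (fun a1 => Y (G a1 b1) (a1 - a - 1) (H (b - b1)))).

(* Y_W(G(x_A,x_2), x_2) w *)
Definition YWser (K : fieldType) (V W : lmodType K) (YW : V -> int -> W -> W)
    (G : ser2 V) (w : W) : ser2 W :=
  fun a c => fsumZ (fun b => YW (G a b) (b - c - 1) w).
Definition YWser_ok (K : fieldType) (V W : lmodType K) (YW : V -> int -> W -> W)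
    (G : ser2 V) (w : W) : Prop :=
  forall a c, finsuppZ (fun b => YW (G a b) (b - c - 1) w).

(* Y_W(G(x_2), x_2) w, one variable *)
Definition YWser1 (K : fieldType) (V W : lmodType K) (YW : V -> int -> W -> W)
    (G : int -> V) (w : W) : int -> W :=
  fun c => fsumZ (fun b => YW (G b) (b - c - 1) w).

(* Y_W(u, x_0+x_2) F(x_2), (x_0+x_2)^{-m-1} expanded in nonneg powers of x_2:
   coefficient of x_0^a x_2^b is sum_{j>=0} binom(a+j,j) u_{-a-1-j} F_{b-j} *)
Definition YW_shift (K : fieldType) (V W : lmodType K) (YW : V -> int -> W -> W)
    (u : V) (F : int -> W) : ser2 W :=
  fun a b => fsumN (fun j => YW u (- a - 1 - j%:Z) (F (b - j%:Z)) *~ binZ (a + j%:Z) j).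

(* Y_W(G(x_1), x_1) F(x_2) *)
Definition YW_x1 (K : fieldType) (V W : lmodType K) (YW : V -> int -> W -> W)
    (G : int -> V) (F : int -> W) : ser2 W :=
  fun a b => fsumZ (fun c => YW (G c) (c - a - 1) (F b)).

From Pilot Require Import Defs.
From HB Require Import structures.
From mathcomp Require Import all_boot all_order all_algebra.
From mathcomp Require Import ring zify.
From Stdlib Require Import ClassicalEpsilon FunctionalExtensionality.
Set Implicit Arguments. Unset Strict Implicit. Unset Printing Implicit Defensive.
Import Order.TTheory GRing.Theory Num.Theory.
Local Open Scope ring_scope.

(* Both sides are finite sums over the homogeneous components u_(r), v_(s) of u
   and v.  On components x_1^{L(0)} and x_2^{L(0)} are the monomials x_1^r and
   x_2^s, so the left side is the single coefficient u_{r+p'} v_{s+q'} w, and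
   (x_0+x_2)^{L(0)} u_(r) = (x_0+x_2)^r u_(r).  The hypothesis for p = r + p',
   q = s + q' then gives the right side after two instances of Vandermonde's
   convolution: undoing the substitution x_1 = x_0 + x_2, and
   (x_0+x_2)^{deg w} (x_0+x_2)^r = (x_0+x_2)^{r + deg w}.  For r < 0 the latter
   product is a genuine infinite expansion; it is legitimate because every
   binom(r,k) is nonzero in characteristic 0, so the well-definedness of the
   series forces its terms to vanish far out. *)

Section FiniteSums.
Variable M : zmodType.

Lemma sum_ord_widen (F : nat -> M) n n' : (n <= n')%N ->
  (forall i, (n <= i)%N -> (i < n')%N -> F i = 0) ->
  \sum_(i < n) F i = \sum_(i < n') F i.
Proof.
move=> le h; rewrite (big_ord_widen _ _ le) big_mkcond /=; apply: eq_bigr => i _.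
by case: ifP => // /negbT; rewrite -leqNgt => hi; rewrite h.
Qed.

Lemma sum_ord_shift (G : nat -> M) j L N : (j + L <= N)%N ->
  (forall k, (L <= k)%N -> G k = 0) ->
  \sum_(k < L) G k = \sum_(m < N) (if (j <= m)%N then G (m - j)%N else 0).
Proof.
move=> hN hG.
rewrite -(big_mkord xpredT (fun m => if (j <= m)%N then G (m - j)%N else 0)).
rewrite (@big_cat_nat _ _ _ j) //=; last by lia.
rewrite [X in _ = X + _]big1_seq ?add0r; last first.
  by move=> i /andP[_]; rewrite mem_index_iota => /andP[_ hi]; rewrite leqNgt hi.
rewrite -{1}(add0n j) big_addn.
rewrite (eq_big_nat _ _ (F2 := G)); last by move=> i _; rewrite leq_addl addnK.
by rewrite big_mkord; apply: sum_ord_widen => [|i hi _]; [lia | apply: hG].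
Qed.

Lemma sum_ord_diagonal (A L : nat) (F : nat -> M) (c : nat -> nat -> int) :
  (forall j k, (j < A)%N -> (L <= k)%N -> F (k + j)%N *~ c j k = 0) ->
  \sum_(j < A) \sum_(k < L) F (k + j)%N *~ c j k
  = \sum_(m < A + L) F m *~ (\sum_(j < A) (if (j <= m)%N then c j (m - j)%N else 0)).
Proof.
move=> h; rewrite [RHS](eq_bigr _ (fun m _ => mulrz_sumr _ _ _ _)).
rewrite [RHS]exchange_big /=; apply: eq_bigr => j _.
rewrite (@sum_ord_shift (fun k => F (k + j)%N *~ c j k) j L (A + L)); last first.
- by move=> k hk; apply: h.
- by have := ltn_ord j; lia.
apply: eq_bigr => m _; case: ifP => hjm; last by rewrite mulr0z.
by rewrite subnK.
Qed.

Lemma sum_ord_trunc (c : nat -> M) m A : (forall j, (A <= j)%N -> (j <= m)%N -> c j = 0) ->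
  \sum_(j < A) (if (j <= m)%N then c j else 0) = \sum_(j < m.+1) c j.
Proof.
move=> hc; set F := fun j : nat => if (j <= m)%N then c j else 0.
have -> : \sum_(j < m.+1) c j = \sum_(j < m.+1) F j.
  by apply: eq_bigr => j _; rewrite /F -ltnS ltn_ord.
rewrite (@sum_ord_widen F A (maxn A m.+1)) ?leq_maxl //; last first.
  by move=> j hj _; rewrite /F; case: ifP => // /hc ->.
rewrite [RHS](@sum_ord_widen F m.+1 (maxn A m.+1)) ?leq_maxr //.
by move=> j hj _; rewrite /F leqNgt hj.
Qed.

Lemma big_uniq_supp (I : eqType) (f : I -> M) s1 s2 : uniq s1 -> uniq s2 ->
  (forall n, n \notin s1 -> f n = 0) -> (forall n, n \notin s2 -> f n = 0) ->
  \sum_(n <- s1) f n = \sum_(n <- s2) f n.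
Proof.
move=> u1 u2 h1 h2.
have restrict (s t : seq I) : (forall n, n \notin t -> f n = 0) ->
    \sum_(n <- s) f n = \sum_(n <- [seq x <- s | x \in t]) f n.
  move=> Ht; rewrite big_filter [RHS]big_mkcond /=; apply: eq_bigr => n _ /=.
  by case: ifP => // /negbT /Ht ->.
rewrite (restrict s1 s2) // (restrict s2 s1) //; apply/perm_big/uniq_perm;
  rewrite ?filter_uniq // => x; by rewrite !mem_filter andbC.
Qed.

Lemma big_delta (I : eqType) (R : seq I) (i : I) (x : M) : uniq R ->
  \sum_(r <- R) (if i == r then x else 0) = if i \in R then x else 0.
Proof.
move=> uR; case: ifP => iR; last first.
  by rewrite big1_seq // => r /andP[_ hr]; case: eqP => // E; rewrite E hr in iR.
rewrite (perm_big _ (perm_to_rem iR)) big_cons eqxx.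
rewrite big1_seq ?Monoid.mulm1 // => r /andP[_].
by case: eqP => // <-; rewrite mem_rem_uniqF.
Qed.

Definition suppZ (f : int -> M) (s : seq int) := forall n, n \notin s -> f n = 0.

Lemma suppZ_finsuppZ f s : suppZ f s -> finsuppZ f.
Proof.
move=> hs; exists (\sum_(m <- s) `|m|).+1 => n hn; apply: hs; apply/negP => ns.
by move: hn; rewrite (perm_big _ (perm_to_rem ns)) big_cons ltnNge leq_addr.
Qed.

Lemma finsuppZ_suppZ f : finsuppZ f -> exists2 s, uniq s & suppZ f s.
Proof.
case=> N hN; exists [seq i%:Z - N%:Z | i <- iota 0 (2 * N)].
  by rewrite map_inj_uniq ?iota_uniq // => x y; lia.
move=> n nn; apply: hN; rewrite leqNgt; apply/negP => hlt; move/negP: nn; apply.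
by apply/mapP; exists (absz (n + N%:Z)); rewrite ?mem_iota; lia.
Qed.

Lemma fsumZ_seq (f : int -> M) s : uniq s -> suppZ f s -> fsumZ f = \sum_(n <- s) f n.
Proof.
move=> us hs; rewrite /fsumZ.
have /(epsilon_spec (inhabits 0%N)) := suppZ_finsuppZ hs.
set N0 := epsilon _ _ => hN0.
rewrite -(big_mkord xpredT (fun i : nat => f (i%:Z - N0%:Z))) /index_iota subn0.
rewrite -(big_map (fun i : nat => i%:Z - N0%:Z) xpredT f).
apply: big_uniq_supp => //; first by rewrite map_inj_uniq ?iota_uniq // => x y; lia.
move=> n nn; apply: hN0; rewrite leqNgt; apply/negP => hlt; move/negP: nn; apply.
by apply/mapP; exists (absz (n + N0%:Z)); rewrite ?mem_iota; lia.
Qed.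

Lemma fsumZ_suppZ f s : suppZ f s -> fsumZ f = \sum_(n <- undup s) f n.
Proof.
by move=> hs; apply: fsumZ_seq (undup_uniq s) _ => n; rewrite mem_undup; apply: hs.
Qed.

Lemma fsumN_ord (f : nat -> M) L : (forall n, (L <= n)%N -> f n = 0) ->
  fsumN f = \sum_(i < L) f i.
Proof.
move=> hL; rewrite /fsumN.
have /(epsilon_spec (inhabits 0%N)) : finsuppN f by exists L.
set N0 := epsilon _ _ => hN0.
rewrite (@sum_ord_widen _ N0 (maxn N0 L)) ?leq_maxl // => [|i hi _]; last exact: hN0.
by rewrite [RHS](@sum_ord_widen _ L (maxn N0 L)) ?leq_maxr // => i hi _; apply: hL.
Qed.

Lemma eq_fsumZ (f g : int -> M) : f =1 g -> fsumZ f = fsumZ g.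
Proof. by move=> /functional_extensionality ->. Qed.

Lemma eq_fsumN (f g : nat -> M) : f =1 g -> fsumN f = fsumN g.
Proof. by move=> /functional_extensionality ->. Qed.

Lemma eq_finsuppZ (f g : int -> M) : f =1 g -> finsuppZ f = finsuppZ g.
Proof. by move=> /functional_extensionality ->. Qed.

Lemma fsumZ_eq0 (f : int -> M) : f =1 (fun=> 0) -> fsumZ f = 0.
Proof. by move=> h; rewrite (@fsumZ_seq _ [::]) ?big_nil. Qed.

Lemma fsumZ_delta (f : int -> M) a : (forall n, n != a -> f n = 0) -> fsumZ f = f a.
Proof.
by move=> h; rewrite (@fsumZ_seq f [:: a]) ?big_seq1 // => n; rewrite inE; apply: h.
Qed.

Lemma finsuppZ_delta (f : int -> M) a : (forall n, n != a -> f n = 0) -> finsuppZ f.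
Proof. by move=> h; apply: (@suppZ_finsuppZ f [:: a]) => n; rewrite inE; apply: h. Qed.

Lemma finsuppZD (f g : int -> M) : finsuppZ f -> finsuppZ g -> finsuppZ (fun n => f n + g n).
Proof.
move=> /finsuppZ_suppZ [s1 _ h1] /finsuppZ_suppZ [s2 _ h2].
apply: (@suppZ_finsuppZ _ (s1 ++ s2)) => n.
by rewrite mem_cat negb_or => /andP[/h1 -> /h2 ->]; rewrite addr0.
Qed.

Lemma fsumZD (f g : int -> M) : finsuppZ f -> finsuppZ g ->
  fsumZ (fun n => f n + g n) = fsumZ f + fsumZ g.
Proof.
move=> /finsuppZ_suppZ [s1 _ h1] /finsuppZ_suppZ [s2 _ h2].
have H1 : suppZ f (s1 ++ s2) by move=> n; rewrite mem_cat negb_or => /andP[/h1].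
have H2 : suppZ g (s1 ++ s2) by move=> n; rewrite mem_cat negb_or => /andP[_ /h2].
have H3 : suppZ (fun n => f n + g n) (s1 ++ s2) by move=> n hn; rewrite H1 // H2 // addr0.
by rewrite (fsumZ_suppZ H1) (fsumZ_suppZ H2) (fsumZ_suppZ H3) big_split.
Qed.

Lemma finsuppZ_sum (I : Type) (r : seq I) (F : I -> int -> M) :
  (forall i, finsuppZ (F i)) -> finsuppZ (fun n => \sum_(i <- r) F i n).
Proof.
move=> hF; elim: r => [|i r IH].
  by under eq_finsuppZ do rewrite big_nil; exists 0%N.
by under eq_finsuppZ do rewrite big_cons; apply: finsuppZD.
Qed.

Lemma fsumZ_sum (I : Type) (r : seq I) (F : I -> int -> M) :
  (forall i, finsuppZ (F i)) ->
  fsumZ (fun n => \sum_(i <- r) F i n) = \sum_(i <- r) fsumZ (F i).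
Proof.
move=> hF; elim: r => [|i r IH].
  by under eq_fsumZ do rewrite big_nil; rewrite fsumZ_eq0 ?big_nil.
under eq_fsumZ do rewrite big_cons.
by rewrite fsumZD ?IH ?big_cons //; apply: finsuppZ_sum.
Qed.

Lemma fsumZ_fsumN (f : int -> M) s0 : finsuppZ f -> (forall n, n < s0 -> f n = 0) ->
  fsumZ f = fsumN (fun k => f (s0 + k%:Z)).
Proof.
move=> [N hN] hlt; set L := absz (N%:Z - s0).
have hL n : (L <= n)%N -> f (s0 + n%:Z) = 0 by move=> hn; apply: hN; lia.
rewrite (fsumN_ord hL) -(big_mkord xpredT (fun k => f (s0 + k%:Z))).
rewrite -(big_map (fun k : nat => s0 + k%:Z) xpredT f) /index_iota subn0.
apply: fsumZ_seq; first by rewrite map_inj_uniq ?iota_uniq // => x y; lia.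
move=> n nn; case: (ltP n s0) => [/hlt //|hn]; apply: hN.
rewrite leqNgt; apply/negP => hlt'; move/negP: nn; apply.
by apply/mapP; exists (absz (n - s0)); rewrite ?mem_iota; lia.
Qed.

End FiniteSums.

Lemma binZ0 n : binZ n 0 = 1.
Proof. by case: n => k /=; rewrite bin0 // expr0 mul1r. Qed.

Lemma binZ_small z j : 0 <= z -> (absz z < j)%N -> binZ z j = 0.
Proof. by case: z => // n _ /= h; rewrite bin_small. Qed.

Lemma binZ_neq0 r k : r < 0 -> binZ r k != 0.
Proof.
case: r => // n _ /=; rewrite mulf_eq0 negb_or signr_eq0 /=.
by rewrite eqz_nat -lt0n bin_gt0 leq_addl.
Qed.

Lemma binZS n j : binZ (n + 1) j.+1 = binZ n j.+1 + binZ n j.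
Proof.
case: n => [k|[|k]].
- rewrite (_ : Posz k + 1 = Posz k.+1); last by rewrite -addn1.
  by rewrite /= binS PoszD.
- by rewrite (_ : Negz 0 + 1 = Posz 0) //= bin0n add0n !binn /= exprS; ring.
rewrite (_ : Negz k.+1 + 1 = Negz k); last by rewrite NegzE; lia.
rewrite /= (_ : (k.+1 + j.+1 = (k + j.+1).+1)%N); last by lia.
rewrite binS (_ : (k.+1 + j = k + j.+1)%N); last by lia.
by rewrite PoszD exprS; ring.
Qed.

Definition binZ_conv (a b : int) (m : nat) := \sum_(j < m.+1) binZ a j * binZ b (m - j).

Lemma binZ_convS a b m : binZ_conv a (b + 1) m.+1 = binZ_conv a b m.+1 + binZ_conv a b m.
Proof.
rewrite /binZ_conv big_ord_recr /= subnn binZ0.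
rewrite [X in _ = X + _]big_ord_recr /= subnn binZ0.
have -> : \sum_(i < m.+1) binZ a i * binZ (b + 1) (m.+1 - i)
   = \sum_(i < m.+1) binZ a i * binZ b (m.+1 - i) + \sum_(i < m.+1) binZ a i * binZ b (m - i).
  rewrite -big_split /=; apply: eq_bigr => i _.
  have -> : (m.+1 - i = (m - i).+1)%N by have := ltn_ord i; lia.
  by rewrite binZS mulrDr.
ring.
Qed.

Lemma binZ_vandermonde a b m : binZ_conv a b m = binZ (a + b) m.
Proof.
have conv0 c : binZ_conv a c 0 = 1 by rewrite /binZ_conv big_ord1 !binZ0 mul1r.
elim/int_rec: b m => [|n IH|n IH] m.
- rewrite addr0 /binZ_conv big_ord_recr /= subnn bin0 mulr1 big1 ?add0r // => i _.
  have -> : (m - i = (m - i).-1.+1)%N by have := ltn_ord i; lia.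
  by rewrite bin0n /= mulr0.
- case: m => [|m]; first by rewrite conv0 binZ0.
  rewrite (_ : Posz n.+1 = n%:Z + 1); last by rewrite -addn1.
  by rewrite binZ_convS !IH addrA binZS.
- elim: m => [|m IHm]; first by rewrite conv0 binZ0.
  have -> : binZ_conv a (- n.+1%:Z) m.+1
      = binZ_conv a (- n.+1%:Z + 1) m.+1 - binZ_conv a (- n.+1%:Z) m.
    by rewrite binZ_convS; ring.
  rewrite IHm (_ : - n.+1%:Z + 1 = - n%:Z); last by lia.
  rewrite IH (_ : a + - n%:Z = (a + - n.+1%:Z) + 1); last by lia.
  by rewrite binZS; ring.
Qed.

Lemma binZ_conv_delta p m : binZ_conv p (m%:Z - p - 1) m = (m == 0%N)%:R.
Proof.
rewrite binZ_vandermonde (_ : p + (m%:Z - p - 1) = m%:Z - 1); last by ring.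
by case: m => [|m] //=; rewrite subn1 bin_small.
Qed.

Section BinomialProducts.
Variable M : zmodType.

Definition antidiag_finite (F : ser2 M) :=
  forall a b, exists L : nat, forall k, (L <= k)%N -> F (a + k%:Z) (b - k%:Z) = 0.

Lemma binmul_ok_antidiag n (F : ser2 M) : (n < 0 -> antidiag_finite F) -> binmul_ok n F.
Proof.
move=> hF a b; case: (ltP n 0) => hn; last first.
  by exists (absz n).+1 => j hj; rewrite binZ_small ?mulr0z.
have [L hL] := hF hn (a - n) b; exists L => j hj.
by rewrite hL ?mul0rz.
Qed.

Lemma binmul_nat (d : nat) (F : ser2 M) a b :
  binmul d%:Z F a b = \sum_(j < d.+1) F (a - d%:Z + j%:Z) (b - j%:Z) *~ binZ d j.
Proof. by rewrite /binmul (@fsumN_ord _ _ d.+1) // => j hj; rewrite /= bin_small ?mulr0z. Qed.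

Lemma binmulD_nat (d : nat) (r : int) (F : ser2 M) a b : (r < 0 -> antidiag_finite F) ->
  binmul d%:Z (binmul r F) a b = binmul (r + d%:Z) F a b.
Proof.
move=> hF; rewrite binmul_nat /binmul.
set g := fun m : nat => F (a - d%:Z - r + m%:Z) (b - m%:Z).
have [L hLr hLrd] : exists2 L : nat,
    (forall j k, (L <= k)%N -> g (k + j)%N *~ binZ r k = 0) &
    (forall m, (d.+1 + L <= m)%N -> g m *~ binZ (r + d%:Z) m = 0).
  case: (ltP r 0) => hr; last first.
    exists (absz r).+1 => [j k hk | m hm]; rewrite binZ_small ?mulr0z //; lia.
  have [L hL] := hF hr (a - d%:Z - r) b.
  by exists L => [j k hk | m hm]; rewrite /g hL ?mul0rz //; lia.
transitivity (\sum_(j < d.+1) \sum_(k < L) g (k + j)%N *~ (binZ d j * binZ r k)).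
  apply: eq_bigr => j _; rewrite (@fsumN_ord _ _ L) => [|k hk]; last first.
    by rewrite -(hLr j k hk) /g; congr (F _ _ *~ _); rewrite PoszD; ring.
  rewrite mulrz_suml; apply: eq_bigr => k _; rewrite -mulrzA_C /g.
  by congr (F _ _ *~ _ *~ _); rewrite PoszD; ring.
rewrite (@sum_ord_diagonal _ _ _ g (fun j k => binZ d j * binZ r k)) => [|j k _ hk]; last first.
  by rewrite mulrC mulrzA hLr ?mul0rz.
rewrite (@fsumN_ord _ _ (d.+1 + L)) => [|m hm]; last first.
  by rewrite -(hLrd m hm) /g; congr (F _ _ *~ _); ring.
apply: eq_bigr => m _.
rewrite (@sum_ord_trunc _ (fun j => binZ d j * binZ r (m - j))) => [|j hj _]; last first.
  by rewrite /= bin_small ?mul0r.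
by rewrite -/(binZ_conv _ _ _) binZ_vandermonde addrC /g; congr (F _ _ *~ _); ring.
Qed.

End BinomialProducts.

Section LinearP.
Variables (K : fieldType) (A B : lmodType K) (f : A -> B).
Hypothesis f_lin : Defs.linearP f.

Lemma linearP0 : f 0 = 0.
Proof.
have := f_lin 1 0 0; rewrite !scale1r addr0 => h.
by apply: (addrI (f 0)); rewrite addr0 -h.
Qed.

Lemma linearPD x y : f (x + y) = f x + f y.
Proof. by have := f_lin 1 x y; rewrite !scale1r. Qed.

Lemma linearPMz x z : f (x *~ z) = f x *~ z.
Proof. by have := f_lin z%:~R x 0; rewrite addr0 linearP0 addr0 !scaler_int. Qed.

Lemma linearP_sum (I : Type) (r : seq I) (F : I -> A) :
  f (\sum_(i <- r) F i) = \sum_(i <- r) f (F i).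
Proof. by elim: r => [|i r IH]; rewrite ?big_nil ?linearP0 // !big_cons linearPD IH. Qed.

End LinearP.

Lemma mulrz_eq0_pchar0 (K : fieldType) (W : lmodType K) (x : W) (z : int) :
  [pchar K] =i pred0 -> z != 0 -> x *~ z = 0 -> x = 0.
Proof.
move=> charK hz; rewrite -scaler_int => /eqP; rewrite scaler_eq0 => /orP[|/eqP //].
have natf_neq0 := (pcharf0P K).1 charK.
case: z hz => n hz; first by rewrite -pmulrn natf_neq0 => /eqP n0; rewrite n0 in hz.
by rewrite NegzE mulrNz -pmulrn oppr_eq0 natf_neq0.
Qed.

Section VertexOperators.
Variables (K : fieldType) (V W : lmodType K).
Variables (Y : V -> int -> V -> V) (pr : int -> V -> V) (YW : V -> int -> W -> W).
Hypothesis charK : [pchar K] =i pred0.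
Hypothesis Y_linl : forall n v, Defs.linearP (fun u => Y u n v).
Hypothesis Y_linr : forall u n, Defs.linearP (Y u n).
Hypothesis YW_linl : forall n w, Defs.linearP (fun u => YW u n w).
Hypothesis YW_linr : forall u n, Defs.linearP (YW u n).
Hypothesis YW_trunc : forall u w, exists N : int, forall n, N <= n -> YW u n w = 0.
Hypothesis pr_pr : forall n m v, pr n (pr m v) = if n == m then pr n v else 0.

Local Notation Y0l := (linearP0 (Y_linl _ _)).
Local Notation Y0r := (linearP0 (Y_linr _ _)).
Local Notation YW0l := (linearP0 (YW_linl _ _)).
Local Notation YW0r := (linearP0 (YW_linr _ _)).
Local Notation YL u v := (Yser Y (Lpow2 pr u) (Lpow1 pr v)).
Local Notation Y0 u v := (Yser Y (cst2 u) (cst1 v)).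

Lemma YWser1_cst v w c : YWser1 YW (cst1 v) w c = YW v (- c - 1) w.
Proof.
rewrite /YWser1 (@fsumZ_delta _ _ 0) /cst1 ?eqxx ?sub0r // => n /negbTE ->.
exact: YW0l.
Qed.

Lemma Yser_cst u v a b : Y0 u v a b = if b == 0 then Y u (- a - 1) v else 0.
Proof.
rewrite /Yser (@fsumZ_delta _ _ b); last first.
  move=> b1 hb1; apply: fsumZ_eq0 => a1; rewrite /cst1.
  by case: eqP => [E|_]; [move/eqP: hb1; lia | exact: Y0r].
rewrite subrr /cst1 eqxx (@fsumZ_delta _ _ 0).
  by rewrite /cst2 eqxx /= sub0r; case: eqP => // _; exact: Y0l.
by move=> a1 /negbTE ha1; rewrite /cst2 ha1 /= Y0l.
Qed.

Lemma YWser_cst u v w a c : YWser YW (Y0 u v) w a c = YW (Y u (- a - 1) v) (- c - 1) w.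
Proof.
rewrite /YWser (@fsumZ_delta _ _ 0); first by rewrite Yser_cst eqxx sub0r.
by move=> b /negbTE hb; rewrite Yser_cst hb YW0l.
Qed.

(* Undoing x_1 = x_0 + x_2: the two binomial expansions are mutually inverse,
   which is the identity [binZ_conv_delta]. *)
Lemma Res2_YW_shift u v w p q :
  Res2 (binmul p (mono 0 q (YW_shift YW u (YWser1 YW (cst1 v) w)))) = YW u p (YW v q w).
Proof.
rewrite /Res2 /binmul /mono /YW_shift.
have [T hT] := YW_trunc v w.
set N := (absz (T - q)).+1.
set g := fun m : nat => YW u (p - m%:Z) (YW v (q + m%:Z) w).
have hg m : (N <= m)%N -> g m = 0 by move=> hm; rewrite /g hT ?YW0r //; lia.
set c := fun j k : nat => binZ p j * binZ ((k + j)%N%:Z - p - 1) k.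
transitivity (fsumN (fun j => fsumN (fun k => g (k + j)%N *~ binZ ((k + j)%N%:Z - p - 1) k)
                              *~ binZ p j)).
  apply: eq_fsumN => j; congr (_ *~ _); apply: eq_fsumN => k.
  rewrite YWser1_cst /g; congr (YW u _ (YW v _ w) *~ binZ _ _); rewrite PoszD; ring.
rewrite (@fsumN_ord _ _ N); last first.
  move=> j hj; rewrite (@fsumN_ord _ _ 0) ?big_ord0 ?mul0rz // => k _.
  by rewrite hg ?mul0rz //; lia.
transitivity (\sum_(j < N) \sum_(k < N) g (k + j)%N *~ c j k).
  apply: eq_bigr => j _; rewrite (@fsumN_ord _ _ N) ?mulrz_suml.
    by apply: eq_bigr => k _; rewrite mulrzA_C.
  by move=> k hk; rewrite hg ?mul0rz //; lia.
rewrite sum_ord_diagonal => [|j k _ hk]; last by rewrite hg ?mul0rz //; lia.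
have coef m : g m *~ (\sum_(j < N) (if (j <= m)%N then c j (m - j)%N else 0))
              = g m *~ (m == 0%N)%:R.
  case: (ltnP m N) => hm; last by rewrite hg ?mul0rz.
  rewrite (@sum_ord_trunc _ (fun j => c j (m - j)%N)) => [|j hj hjm]; last by lia.
  rewrite -(binZ_conv_delta p) /binZ_conv; congr (_ *~ _); apply: eq_bigr => j _.
  by rewrite /c subnK // -ltnS.
under eq_bigr do rewrite coef.
by rewrite big_ord_recl /= mulr1z big1 ?addr0 /g ?subr0 ?addr0 // => m _; rewrite mulr0z.
Qed.

Lemma Yser_Lpow_pr r s u v a b : YL (pr r u) (pr s v) a b =
  match b - s with
  | Posz k => Y (pr r u) (r - k%:Z - a - 1) (pr s v) *~ binZ r k
  | Negz _ => 0
  end.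
Proof.
rewrite /Yser (@fsumZ_delta _ _ (b - s)); last first.
  move=> b1 hb1; apply: fsumZ_eq0 => a1; rewrite /Lpow1 pr_pr.
  by case: eqP => [E|_]; [move/eqP: hb1; lia | exact: Y0r].
rewrite (_ : b - (b - s) = s); last by ring.
rewrite /Lpow1 pr_pr eqxx; case: (b - s) => [k|k]; last first.
  by apply: fsumZ_eq0 => a1; rewrite /Lpow2 Y0l.
rewrite (@fsumZ_delta _ _ (r - k%:Z)).
  rewrite /Lpow2 (_ : r - k%:Z + k%:Z = r); last by ring.
  by rewrite pr_pr eqxx (linearPMz (Y_linl _ _)).
move=> a1 ha1; rewrite /Lpow2 pr_pr; case: eqP => [E|_]; first by move/eqP: ha1; lia.
by rewrite mul0rz Y0l.
Qed.

(* (x_0+x_2)^{L(0)} u_(r) = (x_0+x_2)^r u_(r) and x_2^{L(0)} v_(s) = x_2^s v_(s). *)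
Lemma YWser_Lpow_pr r s u v w a c : YWser_ok YW (YL (pr r u) (pr s v)) w ->
  YWser YW (YL (pr r u) (pr s v)) w a c = binmul r (YWser YW (Y0 (pr r u) (pr s v)) w) a (c - s).
Proof.
move=> hok; rewrite /YWser (@fsumZ_fsumN _ _ s) // => [|n hn]; last first.
  by rewrite Yser_Lpow_pr; case E: (n - s) => [k|k]; [lia | exact: YW0l].
rewrite /binmul; apply: eq_fsumN => k; rewrite Yser_Lpow_pr (_ : s + k%:Z - s = k%:Z); last by ring.
rewrite (linearPMz (YW_linl _ _)) (@fsumZ_delta _ _ 0) => [|b /negbTE hb]; last first.
  by rewrite Yser_cst hb YW0l.
by rewrite Yser_cst eqxx; congr (YW (Y _ _ _) _ _ *~ _); ring.
Qed.

(* For r < 0 every coefficient binZ r k is nonzero, so in characteristic 0 the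
   well-definedness of the left-hand series truncates the terms themselves. *)
Lemma YWser_cst_antidiag r s u v w : YWser_ok YW (YL (pr r u) (pr s v)) w -> r < 0 ->
  antidiag_finite (YWser YW (Y0 (pr r u) (pr s v)) w).
Proof.
move=> hok hr a b; have [N hN] := hok (r + a) (s + b).
exists (N + absz s)%N => k hk; rewrite YWser_cst.
apply: (mulrz_eq0_pchar0 charK (binZ_neq0 k hr)).
have := hN (s + k%:Z); rewrite Yser_Lpow_pr (_ : s + k%:Z - s = k%:Z) /=; last by ring.
rewrite (linearPMz (YW_linl _ _)) => <-; last by lia.
by congr (YW (Y _ _ _) _ _ *~ _); ring.
Qed.

Lemma binmul_YWser_Lpow_pr r s u v w (d : nat) a b : YWser_ok YW (YL (pr r u) (pr s v)) w ->
  binmul d%:Z (YWser YW (YL (pr r u) (pr s v)) w) a b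
  = binmul (r + d%:Z) (YWser YW (Y0 (pr r u) (pr s v)) w) a (b - s).
Proof.
move=> hok; rewrite -binmulD_nat; last exact: YWser_cst_antidiag.
rewrite /binmul; apply: eq_fsumN => j; rewrite YWser_Lpow_pr //.
by rewrite (_ : b - j%:Z - s = b - s - j%:Z) //; ring.
Qed.

Lemma Lpow1_sum_pr v S : uniq S -> suppZ (pr^~ v) S ->
  forall t, Lpow1 pr v t = \sum_(s <- S) Lpow1 pr (pr s v) t.
Proof.
move=> uS hS t; rewrite /Lpow1; under eq_bigr do rewrite pr_pr.
by rewrite big_delta //; case: ifP => // /negbT /hS.
Qed.

Lemma Lpow2_sum_pr u R : uniq R -> suppZ (pr^~ u) R ->
  forall a b, Lpow2 pr u a b = \sum_(r <- R) Lpow2 pr (pr r u) a b.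
Proof.
move=> uR hR a [j|j] /=; last by rewrite big1.
under eq_bigr do rewrite pr_pr.
by rewrite -mulrz_suml big_delta //; case: ifP => // /negbT /hR ->; rewrite mul0rz.
Qed.

Lemma Yser_Lpow_sum_pr u v R S : uniq R -> suppZ (pr^~ u) R -> uniq S -> suppZ (pr^~ v) S ->
  forall a b, YL u v a b = \sum_(r <- R) \sum_(s <- S) YL (pr r u) (pr s v) a b.
Proof.
move=> uR hR uS hS a b; rewrite /Yser.
set y := fun r s b1 a1 =>
  Y (Lpow2 pr (pr r u) a1 b1) (a1 - a - 1) (Lpow1 pr (pr s v) (b - b1)).
have fin_a r s b1 : finsuppZ (y r s b1).
  apply: (finsuppZ_delta (a := r - b1)) => a1 h; rewrite /y /Lpow2.
  case: b1 h => // [j h|j _]; last exact: Y0l.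
  by rewrite pr_pr; case: eqP => [E|_]; [move/eqP: h; lia | rewrite mul0rz Y0l].
have fin_b r s : finsuppZ (fun b1 => fsumZ (y r s b1)).
  apply: (finsuppZ_delta (a := b - s)) => b1 h; apply: fsumZ_eq0 => a1.
  rewrite /y /Lpow1 pr_pr; case: eqP => [E|_]; last exact: Y0r.
  by move/eqP: h; lia.
transitivity (fsumZ (fun b1 => \sum_(r <- R) \sum_(s <- S) fsumZ (y r s b1))).
  apply: eq_fsumZ => b1.
  transitivity (fsumZ (fun a1 => \sum_(r <- R) \sum_(s <- S) y r s b1 a1)).
    apply: eq_fsumZ => a1; rewrite (Lpow2_sum_pr uR hR) (linearP_sum (Y_linl _ _)).
    by apply: eq_bigr => r _; rewrite (Lpow1_sum_pr uS hS) (linearP_sum (Y_linr _ _)).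
  rewrite fsumZ_sum => [|r]; last exact: finsuppZ_sum.
  by apply: eq_bigr => r _; rewrite fsumZ_sum.
rewrite fsumZ_sum => [|r]; last exact: finsuppZ_sum.
by apply: eq_bigr => r _; rewrite fsumZ_sum.
Qed.

Lemma binmul_YWser_Lpow_sum_pr u v w R S (d : nat) :
  uniq R -> suppZ (pr^~ u) R -> uniq S -> suppZ (pr^~ v) S ->
  (forall r s, YWser_ok YW (YL (pr r u) (pr s v)) w) ->
  forall a b, binmul d%:Z (YWser YW (YL u v) w) a b
  = \sum_(r <- R) \sum_(s <- S) binmul d%:Z (YWser YW (YL (pr r u) (pr s v)) w) a b.
Proof.
move=> uR hR uS hS hok a b.
have YWser_sum a' c : YWser YW (YL u v) w a' c
    = \sum_(r <- R) \sum_(s <- S) YWser YW (YL (pr r u) (pr s v)) w a' c.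
  rewrite /YWser; under eq_fsumZ do
    rewrite (Yser_Lpow_sum_pr uR hR uS hS) (linearP_sum (YW_linl _ _)).
  under eq_fsumZ do under eq_bigr do rewrite (linearP_sum (YW_linl _ _)).
  rewrite fsumZ_sum => [|r]; last by apply: finsuppZ_sum => s; apply: hok.
  by apply: eq_bigr => r _; rewrite fsumZ_sum // => s; apply: hok.
rewrite binmul_nat; under eq_bigr do rewrite YWser_sum mulrz_suml.
rewrite exchange_big; apply: eq_bigr => r _; under eq_bigr do rewrite mulrz_suml.
by rewrite exchange_big; apply: eq_bigr => s _; rewrite binmul_nat.
Qed.

Lemma Res2_YW_x1_sum_pr u v w p q R S :
  uniq R -> suppZ (pr^~ u) R -> uniq S -> suppZ (pr^~ v) S ->
  Res2 (mono p q (YW_x1 YW (Lpow1 pr u) (YWser1 YW (Lpow1 pr v) w)))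
  = \sum_(r <- R) \sum_(s <- S) YW (pr r u) (r + p) (YW (pr s v) (s + q) w).
Proof.
move=> uR hR uS hS; rewrite /Res2 /mono /YW_x1 /YWser1 /Lpow1.
rewrite (fsumZ_seq uR) => [|n /hR ->]; last exact: YW0l.
apply: eq_bigr => r _; rewrite (fsumZ_seq uS) => [|n /hS ->]; last exact: YW0l.
rewrite (linearP_sum (YW_linr _ _)); apply: eq_bigr => s _.
by congr (YW _ _ (YW _ _ w)); ring.
Qed.

Variable prW : nat -> W -> W.
Hypothesis Res2_hom : forall (m s : int) (d : nat) (u v : V) (w : W) (p q : int),
  homV pr m u -> homV pr s v -> homW prW d w -> q < s + d%:Z ->
  binmul_ok (m + d%:Z) (YWser YW (Y0 u v) w) ->
  Res2 (binmul p (mono 0 q (YW_shift YW u (YWser1 YW (cst1 v) w))))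
  = Res2 (polymul (absz (s + d%:Z - q)%R)
            (fun i => binZ (p - (m + d%:Z)) i)
            (fun i => p - (m + d%:Z) - i%:Z) (fun i => i%:Z)
            (mono 0 q (binmul (m + d%:Z) (YWser YW (Y0 u v) w)))).

Lemma YW_pr_pr r s u v (d : nat) w p' q' : homW prW d w -> q' < d%:Z ->
  YWser_ok YW (YL (pr r u) (pr s v)) w ->
  YW (pr r u) (r + p') (YW (pr s v) (s + q') w)
  = \sum_(i < absz (d%:Z - q'))
      binmul d%:Z (YWser YW (YL (pr r u) (pr s v)) w)
        (-1 - (p' - d%:Z - i%:Z) - 0) (-1 - i%:Z - q') *~ binZ (p' - d%:Z) i.
Proof.
move=> hw hq hok.
have := @Res2_hom r s d (pr r u) (pr s v) w (r + p') (s + q').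
rewrite /homV !pr_pr !eqxx Res2_YW_shift => -> //; last first.
- by apply: binmul_ok_antidiag => hrd; apply: YWser_cst_antidiag => //; lia.
- by lia.
rewrite /Res2 /polymul /mono (_ : r + p' - (r + d%:Z) = p' - d%:Z); last by ring.
rewrite (_ : s + d%:Z - (s + q') = d%:Z - q'); last by ring.
apply: eq_bigr => i _; rewrite binmul_YWser_Lpow_pr //.
by congr (binmul _ _ _ _ *~ _); ring.
Qed.

Lemma Res2_YW_x1_Lpow (pr_finsupp : forall v, finsuppZ (fun n => pr n v))
    u v (d : nat) w p' q' : homW prW d w -> q' < d%:Z ->
  (forall r s, YWser_ok YW (YL (pr r u) (pr s v)) w) ->
  Res2 (mono p' q' (YW_x1 YW (Lpow1 pr u) (YWser1 YW (Lpow1 pr v) w)))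
  = Res2 (polymul (absz (d%:Z - q')%R)
            (fun i => binZ (p' - d%:Z) i)
            (fun i => p' - d%:Z - i%:Z) (fun i => i%:Z)
            (mono 0 q' (binmul d%:Z (YWser YW (YL u v) w)))).
Proof.
move=> hw hq hok.
have [R uR hR] := finsuppZ_suppZ (pr_finsupp u).
have [S uS hS] := finsuppZ_suppZ (pr_finsupp v).
rewrite (Res2_YW_x1_sum_pr _ _ _ uR hR uS hS) /Res2 /polymul /mono.
under eq_bigr do under eq_bigr do rewrite (@YW_pr_pr _ _ _ _ d w p' q' hw hq (hok _ _)).
under [RHS]eq_bigr do rewrite (binmul_YWser_Lpow_sum_pr d uR hR uS hS hok) mulrz_suml.
rewrite [RHS]exchange_big; apply: eq_bigr => r _.
by under [RHS]eq_bigr do rewrite mulrz_suml; rewrite [RHS]exchange_big.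
Qed.

End VertexOperators.

Theorem lemma5p1 (K : fieldType) (charK : [pchar K] =i pred0)
  (V W : lmodType K) (vac : V) (Y : V -> int -> V -> V) (pr : int -> V -> V)
  (prW : nat -> W -> W) (YW : V -> int -> W -> W) :
  is_ZVA vac Y pr -> is_Ngrading prW -> is_YW pr prW YW ->
  (forall (m s : int) (d : nat) (u v : V) (w : W) (p q : int),
     homV pr m u -> homV pr s v -> homW prW d w -> q < s + d%:Z ->
     binmul_ok (m + d%:Z) (YWser YW (Yser Y (cst2 u) (cst1 v)) w) ->
     Res2 (binmul p (mono 0 q (YW_shift YW u (YWser1 YW (cst1 v) w))))
     = Res2 (polymul (absz (s + d%:Z - q)%R)
               (fun i => binZ (p - (m + d%:Z)) i)
               (fun i => p - (m + d%:Z) - i%:Z) (fun i => i%:Z)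
               (mono 0 q (binmul (m + d%:Z) (YWser YW (Yser Y (cst2 u) (cst1 v)) w))))) ->
  forall (u v : V) (d : nat) (w : W) (p' q' : int),
    homW prW d w -> q' < d%:Z ->
    (forall r s : int, YWser_ok YW (Yser Y (Lpow2 pr (pr r u)) (Lpow1 pr (pr s v))) w) ->
    Res2 (mono p' q' (YW_x1 YW (Lpow1 pr u) (YWser1 YW (Lpow1 pr v) w)))
    = Res2 (polymul (absz (d%:Z - q')%R)
              (fun i => binZ (p' - d%:Z) i)
              (fun i => p' - d%:Z - i%:Z) (fun i => i%:Z)
              (mono 0 q' (binmul d%:Z (YWser YW (Yser Y (Lpow2 pr u) (Lpow1 pr v)) w)))).
Proof.
move=> [[Y_linl Y_linr] _ _ _ [_ [[_ pr_pr pr_sum] _]]] _ [[YW_linl YW_linr] YW_trunc _] hyp.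
have pr_finsupp v : finsuppZ (fun n => pr n v) by case: (pr_sum v).
exact: (Res2_YW_x1_Lpow charK Y_linl Y_linr YW_linl YW_linr YW_trunc pr_pr hyp pr_finsupp).
Qed.
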